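(* Let $n\ge1$, $1\le i\le n$ be integers, $\alpha,\beta>0$, $\tau\ge0$ with $i\beta(\tau+1)>\tau$. Then $$\xi^{(i)}_\tau(\alpha)=\int_0^\infty\frac{\partial}{\partial\alpha}\log f^{(i)}_{\alpha,\beta}(x)\, f^{(i)}_{\alpha,\beta}(x)^{\tau+1}\,dx=c(i,n)^{\tau+1}\left(\frac{\beta}{\alpha}\right)^{\tau+1}B\!\left(\frac{(n-i+1)\tau\beta+(n-i+1)\beta+\tau}{\beta},\frac{i\tau\beta+i\beta-\tau}{\beta}\right)\left(\frac{-\tau}{\beta+\tau\beta}\right),$$ and $K^{(i)}_\tau(\alpha)=J^{(i)}_{2\tau}(\alpha)-\xi^{(i)}_\tau(\alpha)^2$.
   Context: $c(i,n)=\frac{n!}{(n-i)!(i-1)!}$ and $f^{(i)}_{\alpha,\beta}(x)=\frac{c(i,n)\beta (x/\alpha)^{i\beta-1}}{\alpha(1+(x/\alpha)^\beta)^{n+1}}$, $x>0$, is the density of the $i$-th order statistic of a sample of size $n$ from the log-logistic distribution with scale $\alpha$ and shape $\beta$. Derivatives are with respect to $\alpha$ with $\beta$ known. $J^{(i)}_\tau(\alpha)=\int_0^\infty(\partial_\alpha\log f^{(i)}_{\alpha,\beta})^2 (f^{(i)}_{\alpha,\beta})^{\tau+1}dx$, and $K^{(i)}_\tau(\alpha)$ denotes the quantity $J^{(i)}_{2\tau}(\alpha)-\xi^{(i)}_\tau(\alpha)^2$. $B$ is the Beta function. *)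

From Stdlib Require Import Reals Factorial.
From Coquelicot Require Import Coquelicot.
Open Scope R_scope.

Definition c_coef (i n : nat) : R :=
  INR (fact n) / (INR (fact (n - i)) * INR (fact (i - 1))).

(* density of the i-th order statistic of a log-logistic(alpha, beta) sample of size n, x > 0 *)
Definition f_os (n i : nat) (alpha beta x : R) : R :=
  c_coef i n * beta * Rpower (x / alpha) (INR i * beta - 1)
  / (alpha * Rpower (1 + Rpower (x / alpha) beta) (INR n + 1)).

Definition score (n i : nat) (alpha beta x : R) : R :=
  Derive (fun a => ln (f_os n i a beta x)) alpha.

Definition Beta (a b : R) : R :=
  RInt_gen (fun t => Rpower t (a - 1) * Rpower (1 - t) (b - 1))
    (at_right 0) (at_left 1).

Definition xi_integrand (n i : nat) (alpha beta tau x : R) : R :=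
  score n i alpha beta x * Rpower (f_os n i alpha beta x) (tau + 1).

Definition J_integrand (n i : nat) (alpha beta tau x : R) : R :=
  (score n i alpha beta x) ^ 2 * Rpower (f_os n i alpha beta x) (tau + 1).

Definition xi (n i : nat) (alpha beta tau : R) : R :=
  RInt_gen (xi_integrand n i alpha beta tau) (at_right 0) (Rbar_locally p_infty).

Definition J (n i : nat) (alpha beta tau : R) : R :=
  RInt_gen (J_integrand n i alpha beta tau) (at_right 0) (Rbar_locally p_infty).

Definition K (n i : nat) (alpha beta tau : R) : R :=
  J n i alpha beta (2 * tau) - (xi n i alpha beta tau) ^ 2.

(* Substitute s = S(x) = 1 / (1 + (x/alpha)^beta), the log-logistic survival function,
   which maps (0, oo) decreasingly onto (0, 1).  Since f(x) = c beta/x (1-S)^i S^(n+1-i),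
   score = beta/alpha (n+1-i - (n+1) S) and dS/dx = -(beta/x) S (1-S), the integrand of
   xi becomes C (n+1-i - (n+1) s) s^(p-1) (1-s)^(q-1) ds with C = (c beta/alpha)^(tau+1)
   and p, q the two Beta parameters.  Writing
     n+1-i - (n+1) s = -tau/(beta (tau+1)) + (p (1-s) - q s)/(tau+1),
   the second part integrates s^(p-1) (1-s)^(q-1) (p (1-s) - q s) = d/ds [s^p (1-s)^q],
   which vanishes at both ends, so only the Beta integral survives. *)

From Stdlib Require Import Reals Lra Lia.
From Coquelicot Require Import Coquelicot.
Open Scope R_scope.

Lemma Rpower_pos (x y : R) : 0 < Rpower x y.
Proof. apply exp_pos. Qed.

Lemma Rpower_lt_of_lt_root (p t y : R) :
  0 < p -> 0 < t -> 0 < y < Rpower t (/ p) -> Rpower y p < t.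
Proof.
  intros Hp Ht Hy.
  replace t with (Rpower (Rpower t (/ p)) p).
  - apply Rlt_Rpower_l; lra.
  - rewrite Rpower_mult, Rinv_l, Rpower_1 by lra. reflexivity.
Qed.

Lemma Rpower_le_1 (q y : R) : 0 <= q -> 0 < y <= 1 -> Rpower y q <= 1.
Proof.
  intros Hq Hy. apply Rle_trans with (Rpower 1 q).
  - apply Rle_Rpower_l; lra.
  - unfold Rpower. rewrite ln_1, Rmult_0_r, exp_0. apply Rle_refl.
Qed.

Lemma at_right_lt (a d : R) : 0 < d -> at_right a (fun x => a < x < a + d).
Proof.
  intros Hd. exists (mkposreal d Hd). intros x Hball Hx.
  change (Rabs (x - a) < d) in Hball. apply Rabs_def2 in Hball. lra.
Qed.

Lemma at_left_gt (b d : R) : 0 < d -> at_left b (fun x => b - d < x < b).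
Proof.
  intros Hd. exists (mkposreal d Hd). intros x Hball Hx.
  change (Rabs (x - b) < d) in Hball. apply Rabs_def2 in Hball. lra.
Qed.

Lemma Rmin_Rmax_between (lo hi a b s : R) :
  lo < a < hi -> lo < b < hi -> Rmin a b <= s <= Rmax a b -> lo < s < hi.
Proof.
  intros Ha Hb [Hmin Hmax]. split.
  - eapply Rlt_le_trans; [|exact Hmin]. apply Rmin_glb_lt; lra.
  - eapply Rle_lt_trans; [exact Hmax|]. apply Rmax_lub_lt; lra.
Qed.

Lemma is_RInt_gen_change_var {V : NormedModule R_AbsRing}
  {Fa Fb Ga Gb : (R -> Prop) -> Prop} {FFa : Filter Fa} {FFb : Filter Fb}
  (f g : R -> V) (phi : R -> R) (l : V) :
  filter_prod Fa Fb (fun ab => forall y,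
    is_RInt g (phi (fst ab)) (phi (snd ab)) y -> is_RInt f (fst ab) (snd ab) y) ->
  filterlim phi Fa Ga -> filterlim phi Fb Gb ->
  is_RInt_gen g Ga Gb l -> is_RInt_gen f Fa Fb l.
Proof.
  intros Hsubst Ha Hb Hg P HP.
  pose proof (filterlimi_comp_2 (fun ab => phi (fst ab)) (fun ab => phi (snd ab))
    (fun a b => is_RInt g a b)
    (filterlim_comp _ _ _ _ _ _ _ _ filterlim_fst Ha)
    (filterlim_comp _ _ _ _ _ _ _ _ filterlim_snd Hb) Hg P HP) as Hcomp.
  refine (filter_imp _ _ _ (filter_and _ _ Hsubst Hcomp)).
  intros ab [Hfg [y [Hy HPy]]]. exists y. split; auto.
Qed.

Definition beta_kernel (p q s : R) : R := Rpower s (p - 1) * Rpower (1 - s) (q - 1).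
Definition beta_monomial (p q s : R) : R := Rpower s p * Rpower (1 - s) q.

Lemma beta_kernel_sym (p q s : R) : beta_kernel p q (1 - s) = beta_kernel q p s.
Proof. unfold beta_kernel. replace (1 - (1 - s)) with s by ring. apply Rmult_comm. Qed.

Lemma beta_monomial_sym (p q s : R) : beta_monomial p q (1 - s) = beta_monomial q p s.
Proof. unfold beta_monomial. replace (1 - (1 - s)) with s by ring. apply Rmult_comm. Qed.

Lemma beta_kernel_pos (p q s : R) : 0 < beta_kernel p q s.
Proof. apply Rmult_lt_0_compat; apply Rpower_pos. Qed.

Lemma continuous_beta_kernel (p q s : R) : 0 < s < 1 -> continuous (beta_kernel p q) s.
Proof.
  intros Hs. apply (@ex_derive_continuous R_AbsRing R_NormedModule).
  unfold beta_kernel, Rpower. auto_derive. lra.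
Qed.

Lemma ex_RInt_beta_kernel (p q a b : R) :
  0 < a < 1 -> 0 < b < 1 -> ex_RInt (beta_kernel p q) a b.
Proof.
  intros Ha Hb. apply (@ex_RInt_continuous R_CompleteNormedModule).
  intros s Hs. apply continuous_beta_kernel, (Rmin_Rmax_between 0 1 a b); assumption.
Qed.

Lemma is_derive_beta_monomial (p q s : R) : 0 < s < 1 ->
  is_derive (beta_monomial p q) s (beta_kernel p q s * (p * (1 - s) - q * s)).
Proof.
  intros Hs. unfold beta_monomial, beta_kernel, Rpower. auto_derive; [lra|].
  replace ((p - 1) * ln s) with (p * ln s + - ln s) by ring.
  replace ((q - 1) * ln (1 - s)) with (q * ln (1 - s) + - ln (1 - s)) by ring.
  rewrite !exp_plus, !exp_Ropp, !exp_ln by lra.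
  replace (1 + - s) with (1 - s) by ring. field. lra.
Qed.

Lemma beta_monomial_lt (p q : R) : 0 < p -> 0 < q -> forall eps, 0 < eps ->
  exists d, 0 < d /\ forall s, 0 < s < d -> 0 < beta_monomial p q s < eps.
Proof.
  intros Hp Hq eps Heps.
  exists (Rmin (1 / 2) (Rpower eps (/ p))).
  split; [apply Rmin_pos; [lra | apply Rpower_pos]|].
  intros s [Hs Hsd].
  pose proof (Rmin_l (1 / 2) (Rpower eps (/ p))).
  pose proof (Rmin_r (1 / 2) (Rpower eps (/ p))).
  pose proof (Rpower_lt_of_lt_root p eps s Hp Heps ltac:(lra)).
  pose proof (Rpower_le_1 q (1 - s) ltac:(lra) ltac:(lra)).
  pose proof (exp_pos (p * ln s)). pose proof (exp_pos (q * ln (1 - s))).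
  unfold beta_monomial, Rpower in *. split; nra.
Qed.

Lemma filterlim_beta_monomial_0 (p q : R) : 0 < p -> 0 < q ->
  filterlim (beta_monomial p q) (at_right 0) (locally 0).
Proof.
  intros Hp Hq. apply filterlim_locally. intros eps.
  destruct (beta_monomial_lt p q Hp Hq eps (cond_pos eps)) as [d [Hd Hsmall]].
  refine (filter_imp _ _ _ (at_right_lt 0 d Hd)). intros s Hs.
  specialize (Hsmall s ltac:(lra)).
  change (Rabs (beta_monomial p q s - 0) < eps). rewrite Rminus_0_r, Rabs_pos_eq; lra.
Qed.

Lemma filterlim_beta_monomial_1 (p q : R) : 0 < p -> 0 < q ->
  filterlim (beta_monomial p q) (at_left 1) (locally 0).
Proof.
  intros Hp Hq. apply filterlim_locally. intros eps.
  destruct (beta_monomial_lt q p Hq Hp eps (cond_pos eps)) as [d [Hd Hsmall]].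
  refine (filter_imp _ _ _ (at_left_gt 1 d Hd)). intros s Hs.
  specialize (Hsmall (1 - s) ltac:(lra)).
  change (Rabs (beta_monomial p q s - 0) < eps).
  replace s with (1 - (1 - s)) by ring. rewrite beta_monomial_sym, Rminus_0_r, Rabs_pos_eq; lra.
Qed.

Lemma unit_interval_eventually :
  filter_prod (at_right 0) (at_left 1) (fun ab => 0 < fst ab < 1 /\ 0 < snd ab < 1).
Proof.
  apply (Filter_prod _ _ _ _ _ (at_right_lt 0 1 Rlt_0_1) (at_left_gt 1 1 Rlt_0_1)).
  intros a b Ha Hb. simpl. split; lra.
Qed.

Lemma locally_unit_interval (s : R) : 0 < s < 1 -> locally s (fun t => 0 < t < 1).
Proof.
  intros Hs. exists (mkposreal (Rmin s (1 - s)) ltac:(apply Rmin_pos; lra)).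
  intros t Hball. change (Rabs (t - s) < Rmin s (1 - s)) in Hball.
  apply Rabs_def2 in Hball.
  pose proof (Rmin_l s (1 - s)). pose proof (Rmin_r s (1 - s)). lra.
Qed.

Lemma is_RInt_gen_beta_monomial_deriv (p q : R) : 0 < p -> 0 < q ->
  is_RInt_gen (fun s => beta_kernel p q s * (p * (1 - s) - q * s))
    (at_right 0) (at_left 1) 0.
Proof.
  intros Hp Hq.
  set (dmono := fun s => beta_kernel p q s * (p * (1 - s) - q * s)).
  assert (Hderive : forall s, 0 < s < 1 -> Derive (beta_monomial p q) s = dmono s).
  { intros s Hs. apply is_derive_unique, is_derive_beta_monomial, Hs. }
  assert (Hin : filter_prod (at_right 0) (at_left 1) (fun ab => forall s,
    Rmin (fst ab) (snd ab) <= s <= Rmax (fst ab) (snd ab) -> 0 < s < 1)).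
  { refine (filter_imp _ _ _ unit_interval_eventually).
    intros ab [Ha Hb] s Hs. apply (Rmin_Rmax_between 0 1 (fst ab) (snd ab)); assumption. }
  pose proof (is_RInt_gen_Derive (Fa := at_right 0) (Fb := at_left 1) (beta_monomial p q) 0 0)
    as Hftc.
  rewrite Rminus_0_r in Hftc.
  apply (is_RInt_gen_ext (Derive (beta_monomial p q))).
  - refine (filter_imp _ _ _ Hin). intros ab Hab s Hs. apply Hderive, Hab. lra.
  - apply Hftc.
    + refine (filter_imp _ _ _ Hin). intros ab Hab s Hs.
      eexists. apply is_derive_beta_monomial, Hab, Hs.
    + refine (filter_imp _ _ _ Hin). intros ab Hab s Hs.
      specialize (Hab s Hs).
      apply (continuous_ext_loc _ dmono).
      * refine (filter_imp _ _ _ (locally_unit_interval s Hab)).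
        intros t Ht. symmetry. apply Hderive, Ht.
      * apply (@ex_derive_continuous R_AbsRing R_NormedModule).
        unfold dmono, beta_kernel, Rpower. auto_derive. lra.
    + apply filterlim_beta_monomial_0; assumption.
    + apply filterlim_beta_monomial_1; assumption.
Qed.

Lemma beta_kernel_le (p q s : R) : 0 < s <= 1 / 2 ->
  beta_kernel p q s <= Rpower 2 (Rabs (q - 1)) * Rpower s (p - 1).
Proof.
  intros Hs. unfold beta_kernel. rewrite Rmult_comm.
  apply Rmult_le_compat_r; [left; apply exp_pos|].
  assert (Hln_hi : ln (1 - s) <= 0) by (rewrite <- ln_1; apply ln_le; lra).
  assert (Hln_lo : - ln 2 <= ln (1 - s)).
  { rewrite <- ln_Rinv by lra. apply ln_le; lra. }
  assert (Hexponent : (q - 1) * ln (1 - s) <= Rabs (q - 1) * ln 2).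
  { eapply Rle_trans; [apply Rle_abs|].
    rewrite Rabs_mult, (Rabs_left1 (ln (1 - s))) by lra.
    apply Rmult_le_compat_l; [apply Rabs_pos | lra]. }
  unfold Rpower. destruct Hexponent as [Hlt | Heq].
  - left. apply exp_increasing, Hlt.
  - right. rewrite Heq. reflexivity.
Qed.

Lemma RInt_beta_kernel_le (p q a b : R) : 0 < p -> 0 < a <= b -> b <= 1 / 2 ->
  0 <= RInt (beta_kernel p q) a b <= Rpower 2 (Rabs (q - 1)) * Rpower b p / p.
Proof.
  intros Hp Hab Hb.
  set (M := Rpower 2 (Rabs (q - 1))).
  assert (HM : 0 < M) by apply Rpower_pos.
  assert (Hex : ex_RInt (beta_kernel p q) a b) by (apply ex_RInt_beta_kernel; lra).
  assert (Hmajorant : is_RInt (fun s => M * Rpower s (p - 1)) a b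
                        (M * (Rpower b p - Rpower a p) / p)).
  { replace (M * (Rpower b p - Rpower a p) / p)
      with (minus (M * Rpower b p / p) (M * Rpower a p / p))
      by (unfold minus, plus, opp; simpl; field; lra).
    apply (is_RInt_derive (fun s => M * Rpower s p / p)).
    - intros s Hs. rewrite Rmin_left in Hs by lra.
      unfold Rpower. auto_derive; [lra|].
      replace ((p - 1) * ln s) with (p * ln s + - ln s) by ring.
      rewrite exp_plus, exp_Ropp, exp_ln by lra. field. lra.
    - intros s Hs. rewrite Rmin_left in Hs by lra.
      apply (@ex_derive_continuous R_AbsRing R_NormedModule).
      unfold Rpower. auto_derive. lra. }
  split.
  - apply RInt_ge_0; [lra | exact Hex |].
    intros s _. left. apply beta_kernel_pos.
  - eapply Rle_trans.
    + apply RInt_le; [lra | exact Hex | eexists; exact Hmajorant |].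
      intros s Hs. apply beta_kernel_le. lra.
    + rewrite (is_RInt_unique _ _ _ _ Hmajorant).
      pose proof (exp_pos (p * ln a)). unfold Rpower in *.
      apply Rmult_le_compat_r; [left; apply Rinv_0_lt_compat, Hp|]. nra.
Qed.

Lemma RInt_beta_kernel_small_0 (p q : R) : 0 < p -> forall eps, 0 < eps ->
  exists d, 0 < d <= 1 / 2 /\
    forall a b, 0 < a < d -> 0 < b < d -> Rabs (RInt (beta_kernel p q) a b) < eps.
Proof.
  intros Hp eps Heps.
  set (M := Rpower 2 (Rabs (q - 1))).
  assert (HM : 0 < M) by apply Rpower_pos.
  set (t := eps * p / M).
  assert (Ht : 0 < t) by (unfold t; apply Rdiv_lt_0_compat; nra).
  pose proof (Rmin_l (1 / 2) (Rpower t (/ p))).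
  pose proof (Rmin_r (1 / 2) (Rpower t (/ p))).
  set (d := Rmin (1 / 2) (Rpower t (/ p))) in *.
  assert (Hd : 0 < d) by (apply Rmin_pos; [lra | apply Rpower_pos]).
  assert (Hordered : forall a b, 0 < a <= b -> b < d ->
                       Rabs (RInt (beta_kernel p q) a b) < eps).
  { intros a b Hab Hbd.
    pose proof (RInt_beta_kernel_le p q a b Hp Hab ltac:(lra)) as [Hlo Hhi].
    fold M in Hhi.
    pose proof (Rpower_lt_of_lt_root p t b Hp Ht ltac:(lra)).
    rewrite Rabs_pos_eq by exact Hlo. eapply Rle_lt_trans; [exact Hhi|].
    apply (Rmult_lt_reg_r p); [exact Hp|].
    replace (M * Rpower b p / p * p) with (M * Rpower b p) by (field; lra).
    replace (eps * p) with (M * t) by (unfold t; field; lra).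
    apply Rmult_lt_compat_l; assumption. }
  exists d. split; [lra|]. intros a b Ha Hb.
  destruct (Rle_or_lt a b).
  - apply Hordered; lra.
  - rewrite <- opp_RInt_swap by (apply ex_RInt_beta_kernel; lra).
    unfold opp; simpl. rewrite Rabs_Ropp. apply Hordered; lra.
Qed.

Lemma RInt_beta_kernel_sym (p q a b : R) : 0 < a < 1 -> 0 < b < 1 ->
  RInt (beta_kernel p q) a b = RInt (beta_kernel q p) (1 - b) (1 - a).
Proof.
  intros Ha Hb.
  pose proof (RInt_comp_lin (beta_kernel p q) (-1) 1 (1 - a) (1 - b)) as Hlin.
  replace (-1 * (1 - a) + 1) with a in Hlin by ring.
  replace (-1 * (1 - b) + 1) with b in Hlin by ring.
  rewrite <- Hlin by (apply ex_RInt_beta_kernel; assumption).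
  rewrite <- (opp_RInt_swap (beta_kernel q p)) by (apply ex_RInt_beta_kernel; lra).
  rewrite <- RInt_opp by (apply ex_RInt_beta_kernel; lra).
  apply RInt_ext. intros s _. unfold scal, opp; simpl; unfold mult; simpl.
  replace (-1 * s + 1) with (1 - s) by ring. rewrite beta_kernel_sym. ring.
Qed.

Lemma ex_lim_RInt_beta_kernel (p q : R) : 0 < p -> 0 < q ->
  exists l, filterlim (fun ab => RInt (beta_kernel p q) (fst ab) (snd ab))
              (filter_prod (at_right 0) (at_left 1)) (locally l).
Proof.
  intros Hp Hq. apply (filterlim_locally_cauchy (U := R_CompleteSpace)).
  intros eps. pose proof (cond_pos eps) as Heps.
  destruct (RInt_beta_kernel_small_0 p q Hp (eps / 2)) as [d0 [Hd0 Hsmall0]]; [lra|].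
  destruct (RInt_beta_kernel_small_0 q p Hq (eps / 2)) as [d1 [Hd1 Hsmall1]]; [lra|].
  exists (fun ab => 0 < fst ab < d0 /\ 1 - d1 < snd ab < 1). split.
  - apply (Filter_prod _ _ _ _ _ (at_right_lt 0 d0 ltac:(lra)) (at_left_gt 1 d1 ltac:(lra))).
    intros a b Ha Hb. simpl. split; lra.
  - intros [a b] [a' b'] [Ha Hb] [Ha' Hb']; simpl in *.
    change (Rabs (RInt (beta_kernel p q) a' b' - RInt (beta_kernel p q) a b) < eps).
    assert (Hchasles : RInt (beta_kernel p q) a' b' - RInt (beta_kernel p q) a b
      = RInt (beta_kernel p q) a' a + RInt (beta_kernel q p) (1 - b') (1 - b)).
    { rewrite <- RInt_beta_kernel_sym by lra.
      rewrite <- (RInt_Chasles _ a' a b') by (apply ex_RInt_beta_kernel; lra).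
      rewrite <- (RInt_Chasles _ a b b') by (apply ex_RInt_beta_kernel; lra).
      unfold plus; simpl. ring. }
    rewrite Hchasles. eapply Rle_lt_trans; [apply Rabs_triang|].
    pose proof (Hsmall0 a' a ltac:(lra) ltac:(lra)).
    pose proof (Hsmall1 (1 - b') (1 - b) ltac:(lra) ltac:(lra)). lra.
Qed.

Lemma is_RInt_gen_Beta (p q : R) : 0 < p -> 0 < q ->
  is_RInt_gen (beta_kernel p q) (at_right 0) (at_left 1) (Beta p q).
Proof.
  intros Hp Hq.
  change (Beta p q) with (RInt_gen (beta_kernel p q) (at_right 0) (at_left 1)).
  apply (RInt_gen_correct (V := R_CompleteNormedModule)).
  destruct (ex_lim_RInt_beta_kernel p q Hp Hq) as [l Hl].
  exists l. refine (filterlimi_lim_ext_loc _ _ _ Hl).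
  refine (filter_imp _ _ _ unit_interval_eventually).
  intros ab [Ha Hb]. apply (RInt_correct (V := R_CompleteNormedModule)).
  apply ex_RInt_beta_kernel; assumption.
Qed.

Definition llogis_surv (alpha beta x : R) : R := / (1 + Rpower (x / alpha) beta).

Definition llogis_surv_deriv (alpha beta x : R) : R :=
  - (beta / x) * llogis_surv alpha beta x * (1 - llogis_surv alpha beta x).

Definition llogis_surv_inv (alpha beta s : R) : R := alpha * Rpower ((1 - s) / s) (/ beta).

Lemma llogis_surv_bounds (alpha beta x : R) : 0 < llogis_surv alpha beta x < 1.
Proof.
  unfold llogis_surv. pose proof (exp_pos (beta * ln (x / alpha))). unfold Rpower.
  split.
  - apply Rinv_0_lt_compat. lra.
  - rewrite <- Rinv_1. apply Rinv_lt_contravar; lra.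
Qed.

Lemma is_derive_llogis_surv (alpha beta x : R) : 0 < alpha -> 0 < x ->
  is_derive (llogis_surv alpha beta) x (llogis_surv_deriv alpha beta x).
Proof.
  intros Ha Hx. unfold llogis_surv_deriv, llogis_surv, Rpower.
  pose proof (exp_pos (beta * ln (x / alpha))).
  assert (Hxa : 0 < x / alpha) by (apply Rdiv_lt_0_compat; assumption).
  auto_derive.
  - repeat split; lra.
  - change (x * / alpha) with (x / alpha). field. repeat split; lra.
Qed.

Lemma continuous_llogis_surv_deriv (alpha beta x : R) : 0 < alpha -> 0 < x ->
  continuous (llogis_surv_deriv alpha beta) x.
Proof.
  intros Ha Hx. apply (@ex_derive_continuous R_AbsRing R_NormedModule).
  unfold llogis_surv_deriv, llogis_surv, Rpower.
  pose proof (exp_pos (beta * ln (x / alpha))).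
  assert (Hxa : 0 < x / alpha) by (apply Rdiv_lt_0_compat; assumption).
  auto_derive. repeat split; lra.
Qed.

Lemma llogis_surv_decreasing (alpha beta x y : R) : 0 < alpha -> 0 < beta ->
  0 < x < y -> llogis_surv alpha beta y < llogis_surv alpha beta x.
Proof.
  intros Ha Hb Hxy. unfold llogis_surv.
  assert (Hodds : Rpower (x / alpha) beta < Rpower (y / alpha) beta).
  { apply Rlt_Rpower_l; [exact Hb|]. split.
    - apply Rdiv_lt_0_compat; lra.
    - apply Rmult_lt_compat_r; [apply Rinv_0_lt_compat|]; lra. }
  pose proof (exp_pos (beta * ln (x / alpha))).
  apply Rinv_lt_contravar; [unfold Rpower in *; nra | lra].
Qed.

Lemma llogis_surv_inv_spec (alpha beta s : R) : 0 < alpha -> 0 < beta -> 0 < s < 1 ->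
  0 < llogis_surv_inv alpha beta s /\
  llogis_surv alpha beta (llogis_surv_inv alpha beta s) = s.
Proof.
  intros Ha Hb Hs. unfold llogis_surv_inv, llogis_surv. split.
  - apply Rmult_lt_0_compat; [exact Ha | apply Rpower_pos].
  - replace (alpha * Rpower ((1 - s) / s) (/ beta) / alpha)
      with (Rpower ((1 - s) / s) (/ beta)) by (field; lra).
    rewrite Rpower_mult, Rinv_l, Rpower_1 by (lra || apply Rdiv_lt_0_compat; lra).
    replace (1 + (1 - s) / s) with (/ s) by (field; lra).
    apply Rinv_inv.
Qed.

Lemma ln_llogis_surv (alpha beta x : R) : 0 < alpha -> 0 < x ->
  ln (llogis_surv alpha beta x) = - ln (1 + Rpower (x / alpha) beta) /\
  ln (1 - llogis_surv alpha beta x)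
  = beta * ln (x / alpha) - ln (1 + Rpower (x / alpha) beta).
Proof.
  intros Ha Hx.
  assert (Hxa : 0 < x / alpha) by (apply Rdiv_lt_0_compat; assumption).
  pose proof (Rpower_pos (x / alpha) beta).
  unfold llogis_surv. split.
  - apply ln_Rinv. lra.
  - replace (1 - / (1 + Rpower (x / alpha) beta))
      with (Rpower (x / alpha) beta / (1 + Rpower (x / alpha) beta)) by (field; lra).
    rewrite ln_div, ln_Rpower by lra. reflexivity.
Qed.

Lemma filterlim_llogis_surv_0 (alpha beta : R) : 0 < alpha -> 0 < beta ->
  filterlim (llogis_surv alpha beta) (at_right 0) (at_left 1).
Proof.
  intros Ha Hb P [eps HP].
  set (s := Rmax (1 / 2) (1 - eps)).
  assert (Hs : 0 < s < 1).
  { pose proof (Rmax_l (1 / 2) (1 - eps)). pose proof (cond_pos eps).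
    unfold s; split; [lra | apply Rmax_lub_lt; lra]. }
  destruct (llogis_surv_inv_spec alpha beta s Ha Hb Hs) as [Hd Hinv].
  exists (mkposreal _ Hd). intros x Hball Hx.
  change (Rabs (x - 0) < llogis_surv_inv alpha beta s) in Hball.
  rewrite Rminus_0_r, Rabs_pos_eq in Hball by lra.
  pose proof (llogis_surv_decreasing alpha beta x _ Ha Hb (conj Hx Hball)) as Hlt.
  rewrite Hinv in Hlt.
  pose proof (llogis_surv_bounds alpha beta x). pose proof (Rmax_r (1 / 2) (1 - eps)).
  apply HP; [|lra].
  change (Rabs (llogis_surv alpha beta x - 1) < eps).
  rewrite Rabs_minus_sym, Rabs_pos_eq; unfold s in *; lra.
Qed.

Lemma filterlim_llogis_surv_infty (alpha beta : R) : 0 < alpha -> 0 < beta ->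
  filterlim (llogis_surv alpha beta) (Rbar_locally p_infty) (at_right 0).
Proof.
  intros Ha Hb P [eps HP].
  set (s := Rmin (1 / 2) eps).
  assert (Hs : 0 < s < 1).
  { pose proof (Rmin_l (1 / 2) eps). pose proof (cond_pos eps).
    unfold s; split; [apply Rmin_pos|]; lra. }
  destruct (llogis_surv_inv_spec alpha beta s Ha Hb Hs) as [Hd Hinv].
  exists (llogis_surv_inv alpha beta s). intros x Hx.
  pose proof (llogis_surv_decreasing alpha beta _ x Ha Hb (conj Hd Hx)) as Hlt.
  rewrite Hinv in Hlt.
  pose proof (llogis_surv_bounds alpha beta x). pose proof (Rmin_r (1 / 2) eps).
  apply HP; [|lra].
  change (Rabs (llogis_surv alpha beta x - 0) < eps).
  rewrite Rminus_0_r, Rabs_pos_eq; unfold s in *; lra.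
Qed.

Lemma c_coef_pos (i n : nat) : 0 < c_coef i n.
Proof.
  unfold c_coef. apply Rdiv_lt_0_compat; [apply INR_fact_lt_0|].
  apply Rmult_lt_0_compat; apply INR_fact_lt_0.
Qed.

Definition log_f_os (n i : nat) (alpha beta x : R) : R :=
  ln (c_coef i n) + ln beta + (INR i * beta - 1) * ln (x / alpha) - ln alpha
  - (INR n + 1) * ln (1 + Rpower (x / alpha) beta).

Lemma ln_f_os (n i : nat) (alpha beta x : R) : 0 < alpha -> 0 < beta -> 0 < x ->
  ln (f_os n i alpha beta x) = log_f_os n i alpha beta x.
Proof.
  intros Ha Hb Hx. pose proof (c_coef_pos i n) as Hc.
  pose proof Rpower_pos as Hpow.
  assert (Hcb : 0 < c_coef i n * beta) by (apply Rmult_lt_0_compat; assumption).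
  unfold f_os, log_f_os.
  rewrite ln_div, !ln_mult; auto using Rmult_lt_0_compat.
  rewrite !ln_Rpower. ring.
Qed.

Lemma score_eq (n i : nat) (alpha beta x : R) : 0 < alpha -> 0 < beta -> 0 < x ->
  score n i alpha beta x =
  beta / alpha * (INR n + 1 - INR i - (INR n + 1) * llogis_surv alpha beta x).
Proof.
  intros Ha Hb Hx. unfold score.
  rewrite (Derive_ext_loc _ (fun a => log_f_os n i a beta x)).
  2:{ exists (mkposreal alpha Ha). intros a Hball.
      change (Rabs (a - alpha) < alpha) in Hball. apply Rabs_def2 in Hball.
      apply ln_f_os; lra. }
  apply is_derive_unique. unfold log_f_os, llogis_surv, Rpower.
  pose proof (exp_pos (beta * ln (x / alpha))).
  assert (Hxa : 0 < x / alpha) by (apply Rdiv_lt_0_compat; assumption).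
  auto_derive.
  - repeat split; lra.
  - change (x * / alpha) with (x / alpha). field. repeat split; lra.
Qed.

Definition xi_beta_p (n i : nat) (beta tau : R) : R :=
  (INR (n - i + 1) * tau * beta + INR (n - i + 1) * beta + tau) / beta.

Definition xi_beta_q (i : nat) (beta tau : R) : R :=
  (INR i * tau * beta + INR i * beta - tau) / beta.

Lemma f_os_pow_eq (n i : nat) (alpha beta tau x : R) : (i <= n)%nat ->
  0 < alpha -> 0 < beta -> 0 < x ->
  beta / alpha * Rpower (f_os n i alpha beta x) (tau + 1) =
  - llogis_surv_deriv alpha beta x
  * (Rpower (c_coef i n) (tau + 1) * Rpower (beta / alpha) (tau + 1))
  * beta_kernel (xi_beta_p n i beta tau) (xi_beta_q i beta tau) (llogis_surv alpha beta x).
Proof.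
  intros Hin Ha Hb Hx.
  pose proof (c_coef_pos i n) as Hc.
  pose proof Rpower_pos as Hpow.
  assert (Hba : 0 < beta / alpha) by (apply Rdiv_lt_0_compat; assumption).
  assert (Hxa : 0 < x / alpha) by (apply Rdiv_lt_0_compat; assumption).
  pose proof (llogis_surv_bounds alpha beta x) as [HS HS1].
  pose proof (ln_llogis_surv alpha beta x Ha Hx) as [HlnS Hln1S].
  set (S := llogis_surv alpha beta x) in *.
  assert (H1S : 0 < 1 - S) by lra.
  set (L := ln (x / alpha)) in *. set (l := ln (1 + Rpower (x / alpha) beta)) in *.
  assert (Hlnx : ln x = ln alpha + L).
  { unfold L. rewrite <- ln_mult by assumption. f_equal. field. lra. }
  assert (Hderiv : - llogis_surv_deriv alpha beta x = beta / x * S * (1 - S))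
    by (unfold llogis_surv_deriv; fold S; ring).
  assert (Hbx : 0 < beta / x) by (apply Rdiv_lt_0_compat; assumption).
  assert (Hsurv_deriv : 0 < beta / x * S * (1 - S))
    by (apply Rmult_lt_0_compat; [apply Rmult_lt_0_compat|]; lra).
  assert (Hconst : 0 < Rpower (c_coef i n) (tau + 1) * Rpower (beta / alpha) (tau + 1))
    by (apply Rmult_lt_0_compat; auto).
  rewrite Hderiv.
  apply ln_inv.
  - apply Rmult_lt_0_compat; auto.
  - apply Rmult_lt_0_compat; [apply Rmult_lt_0_compat|]; auto using beta_kernel_pos.
  - unfold beta_kernel.
    rewrite !ln_mult, !ln_div, !ln_Rpower, ln_f_os by auto using Rmult_lt_0_compat.
    rewrite HlnS, Hln1S, Hlnx, ln_div by assumption.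
    unfold log_f_os, xi_beta_p, xi_beta_q. fold L l.
    rewrite plus_INR, minus_INR by exact Hin. simpl INR. field. lra.
Qed.

Definition xi_subst_integrand (n i : nat) (alpha beta tau s : R) : R :=
  Rpower (c_coef i n) (tau + 1) * Rpower (beta / alpha) (tau + 1)
  * (INR n + 1 - INR i - (INR n + 1) * s)
  * beta_kernel (xi_beta_p n i beta tau) (xi_beta_q i beta tau) s.

Lemma xi_integrand_eq (n i : nat) (alpha beta tau x : R) : (i <= n)%nat ->
  0 < alpha -> 0 < beta -> 0 < x ->
  xi_integrand n i alpha beta tau x =
  llogis_surv_deriv alpha beta x
  * - xi_subst_integrand n i alpha beta tau (llogis_surv alpha beta x).
Proof.
  intros Hin Ha Hb Hx. unfold xi_integrand, xi_subst_integrand.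
  rewrite score_eq by assumption.
  rewrite Rmult_comm, <- Rmult_assoc, (Rmult_comm _ (beta / alpha)).
  rewrite f_os_pow_eq by assumption. ring.
Qed.

Lemma is_RInt_xi_integrand_subst (n i : nat) (alpha beta tau a b y : R) : (i <= n)%nat ->
  0 < alpha -> 0 < beta -> 0 < a -> 0 < b ->
  is_RInt (fun s => - xi_subst_integrand n i alpha beta tau s)
    (llogis_surv alpha beta a) (llogis_surv alpha beta b) y ->
  is_RInt (xi_integrand n i alpha beta tau) a b y.
Proof.
  intros Hin Ha Hb Ha0 Hb0 Hy.
  assert (Hseg : forall x, Rmin a b <= x <= Rmax a b -> 0 < x).
  { intros x [Hx _]. eapply Rlt_le_trans; [|exact Hx]. apply Rmin_glb_lt; assumption. }
  rewrite <- (is_RInt_unique _ _ _ _ Hy).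
  apply (is_RInt_ext (fun x => scal (llogis_surv_deriv alpha beta x)
           (- xi_subst_integrand n i alpha beta tau (llogis_surv alpha beta x)))).
  - intros x Hx. symmetry. apply xi_integrand_eq; auto.
    apply Hseg. split; apply Rlt_le; apply Hx.
  - apply (is_RInt_comp (V := R_CompleteNormedModule)
      (fun s => - xi_subst_integrand n i alpha beta tau s)
      (llogis_surv alpha beta) (llogis_surv_deriv alpha beta)).
    + intros x Hx. pose proof (llogis_surv_bounds alpha beta x).
      apply (@ex_derive_continuous R_AbsRing R_NormedModule).
      unfold xi_subst_integrand, beta_kernel, Rpower. auto_derive. lra.
    + intros x Hx. split.
      * apply is_derive_llogis_surv; auto.
      * apply continuous_llogis_surv_deriv; auto.
Qed.

Lemma xi_beta_p_pos (n i : nat) (beta tau : R) :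
  0 < beta -> 0 <= tau -> 0 < xi_beta_p n i beta tau.
Proof.
  intros Hb Ht. unfold xi_beta_p. apply Rdiv_lt_0_compat; [|exact Hb].
  pose proof (lt_0_INR (n - i + 1) ltac:(lia)) as Hm.
  assert (0 <= INR (n - i + 1) * tau * beta)
    by (apply Rmult_le_pos; [apply Rmult_le_pos|]; lra).
  assert (0 < INR (n - i + 1) * beta) by (apply Rmult_lt_0_compat; assumption).
  lra.
Qed.

Lemma xi_beta_q_pos (i : nat) (beta tau : R) :
  0 < beta -> INR i * beta * (tau + 1) > tau -> 0 < xi_beta_q i beta tau.
Proof.
  intros Hb Hcond. unfold xi_beta_q. apply Rdiv_lt_0_compat; [nra | exact Hb].
Qed.

Lemma xi_subst_integrand_split (n i : nat) (alpha beta tau s : R) : (i <= n)%nat ->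
  0 < beta -> 0 <= tau ->
  let p := xi_beta_p n i beta tau in
  let q := xi_beta_q i beta tau in
  let C := Rpower (c_coef i n) (tau + 1) * Rpower (beta / alpha) (tau + 1) in
  xi_subst_integrand n i alpha beta tau s =
  C * (- tau / (beta + tau * beta)) * beta_kernel p q s
  + C / (tau + 1) * (beta_kernel p q s * (p * (1 - s) - q * s)).
Proof.
  intros Hin Hb Ht p q C. unfold xi_subst_integrand. fold p q C.
  unfold p, q, xi_beta_p, xi_beta_q.
  rewrite plus_INR, minus_INR by exact Hin. simpl INR. field. repeat split; nra.
Qed.

Lemma is_RInt_gen_xi_subst_integrand (n i : nat) (alpha beta tau : R) :
  (i <= n)%nat -> 0 < beta -> 0 <= tau -> INR i * beta * (tau + 1) > tau ->
  is_RInt_gen (xi_subst_integrand n i alpha beta tau) (at_right 0) (at_left 1)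
    (Rpower (c_coef i n) (tau + 1) * Rpower (beta / alpha) (tau + 1)
     * Beta (xi_beta_p n i beta tau) (xi_beta_q i beta tau)
     * (- tau / (beta + tau * beta))).
Proof.
  intros Hin Hb Ht Hcond.
  set (p := xi_beta_p n i beta tau). set (q := xi_beta_q i beta tau).
  set (C := Rpower (c_coef i n) (tau + 1) * Rpower (beta / alpha) (tau + 1)).
  assert (Hp : 0 < p) by (apply xi_beta_p_pos; assumption).
  assert (Hq : 0 < q) by (apply xi_beta_q_pos; assumption).
  pose proof (is_RInt_gen_plus _ _ _ _
    (is_RInt_gen_scal _ (C * (- tau / (beta + tau * beta))) _ (is_RInt_gen_Beta p q Hp Hq))
    (is_RInt_gen_scal _ (C / (tau + 1)) _ (is_RInt_gen_beta_monomial_deriv p q Hp Hq)))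
    as Hsplit.
  replace (C * Beta p q * (- tau / (beta + tau * beta)))
    with (plus (scal (C * (- tau / (beta + tau * beta))) (Beta p q))
               (scal (C / (tau + 1)) 0))
    by (unfold plus, scal; simpl; unfold mult; simpl; ring).
  eapply is_RInt_gen_ext; [|exact Hsplit].
  apply filter_forall. intros ab s _. symmetry. apply xi_subst_integrand_split; assumption.
Qed.

Theorem theorem5 (n i : nat) (alpha beta tau : R) :
  (1 <= n)%nat -> (1 <= i)%nat -> (i <= n)%nat ->
  0 < alpha -> 0 < beta -> 0 <= tau ->
  INR i * beta * (tau + 1) > tau ->
  is_RInt_gen (xi_integrand n i alpha beta tau) (at_right 0) (Rbar_locally p_infty)
    (Rpower (c_coef i n) (tau + 1) * Rpower (beta / alpha) (tau + 1)
     * Beta ((INR (n - i + 1) * tau * beta + INR (n - i + 1) * beta + tau) / beta)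
            ((INR i * tau * beta + INR i * beta - tau) / beta)
     * (- tau / (beta + tau * beta)))
  /\ K n i alpha beta tau = J n i alpha beta (2 * tau) - (xi n i alpha beta tau) ^ 2.
Proof.
  intros _ _ Hin Ha Hb Ht Hcond. split; [|reflexivity].
  apply (is_RInt_gen_change_var _ (fun s => - xi_subst_integrand n i alpha beta tau s)
           (llogis_surv alpha beta) (Ga := at_left 1) (Gb := at_right 0)).
  - apply (Filter_prod _ _ _ _ (fun b => 0 < b) (at_right_lt 0 1 Rlt_0_1)).
    + exists 0. intros b Hb0. exact Hb0.
    + intros a b Ha0 Hb0 y. apply is_RInt_xi_integrand_subst; simpl; first [assumption | lra].
  - apply filterlim_llogis_surv_0; assumption.
  - apply filterlim_llogis_surv_infty; assumption.
  - (* [llogis_surv] is decreasing: the s-integral runs from 1 down to 0. *)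
    rewrite <- opp_opp. apply is_RInt_gen_swap.
    apply (is_RInt_gen_opp (xi_subst_integrand n i alpha beta tau)).
    apply is_RInt_gen_xi_subst_integrand; assumption.
Qed.
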